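(* Let $n\ge 2$, $b>0$, and let $p_0,\dots,p_{n-2}$ be complex-valued, $C^\infty$, $b$-periodic functions on $\mathbb{R}$; let $\mathcal{L}u := u^{(n)}+\sum_{k=0}^{n-2}p_k(x)u^{(k)}$. Consider the multipoint eigenvalue problem $$\mathcal{L}u=\lambda u,\qquad u(0)=u(b)=u(2b)=\cdots=u((n-1)b)=0 .$$ Let $\mu$ be an eigenvalue of this problem (i.e. it has a nontrivial solution for $\lambda=\mu$) and let $\mathcal{D}_\mu$ be the vector space of its solutions for $\lambda=\mu$ (the eigenspace). Then $\mathcal{D}_\mu$ has a basis consisting of Floquet solutions (pure, i.e. of rank $1$, and possibly generalized, i.e. of rank $\ge 2$) of $\mathcal{L}u=\mu u$. Moreover, if a Floquet solution $\psi^l$ of rank $l\ge 2$ associated to a multiplier $r$ belongs to $\mathcal{D}_\mu$, then the Floquet solution $\psi^{l-1}$ of rank $l-1$ associated to $r$ for which $\psi^l(x+b)=r\psi^l(x)+\psi^{l-1}(x)$ for all $x$ also belongs to $\mathcal{D}_\mu$.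
   Context: Floquet solutions (for fixed $\lambda$): a nontrivial solution $u^1$ of $\mathcal{L}u=\lambda u$ with $u^1(x+b)=r\,u^1(x)$ for all $x\in\mathbb{R}$ is a (pure) Floquet solution of rank $1$ associated to the multiplier $r$. For $l\ge 2$, a solution $u^l$ of $\mathcal{L}u=\lambda u$ is a (generalized) Floquet solution of rank $l$ associated to $r$ if there is a Floquet solution $u^{l-1}$ of rank $l-1$ associated to $r$ such that $u^l(x+b)=r\,u^l(x)+u^{l-1}(x)$ for all $x\in\mathbb{R}$. The multipliers $r$ are the eigenvalues of the map $f(x)\mapsto f(x+b)$ on the $n$-dimensional solution space of $\mathcal{L}u=\lambda u$. *)

From Stdlib Require Import Reals.
From Coquelicot Require Import Coquelicot.
Open Scope R_scope.

Definition deriv_chain (u : R -> C) (n : nat) (d : nat -> R -> C) : Prop :=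
  d 0%nat = u /\ forall k, (k < n)%nat -> forall x, is_derive (d k) x (d (S k) x).

Definition smooth (u : R -> C) : Prop :=
  exists d : nat -> R -> C, d 0%nat = u /\ forall k x, is_derive (d k) x (d (S k) x).

Definition periodic (b : R) (f : R -> C) : Prop := forall x, f (x + b) = f x.

Fixpoint csum (f : nat -> C) (m : nat) : C :=
  match m with
  | O => RtoC 0
  | S m' => (csum f m' + f m')%C
  end.

Definition is_solution (n : nat) (p : nat -> R -> C) (lam : C) (u : R -> C) : Prop :=
  exists d : nat -> R -> C, deriv_chain u n d /\
    forall x, (d n x + csum (fun k => p k x * d k x) (n - 1)%nat)%C = (lam * u x)%C.

Fixpoint floquet (n : nat) (p : nat -> R -> C) (b : R) (lam r : C) (l : nat) (u : R -> C)
  : Prop :=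
  match l with
  | O => False
  | S O => is_solution n p lam u /\ (exists x, u x <> RtoC 0) /\
           forall x, u (x + b) = (r * u x)%C
  | S l' => is_solution n p lam u /\
           exists v, floquet n p b lam r l' v /\
                     forall x, u (x + b) = (r * u x + v x)%C
  end.

Definition in_eigenspace (n : nat) (p : nat -> R -> C) (b : R) (lam : C) (u : R -> C)
  : Prop :=
  is_solution n p lam u /\ forall j, (j < n)%nat -> u (INR j * b) = RtoC 0.

Definition is_eigenvalue (n : nat) (p : nat -> R -> C) (b : R) (lam : C) : Prop :=
  exists u, in_eigenspace n p b lam u /\ exists x, u x <> RtoC 0.

From Stdlib Require Import Reals Arith Lia Lra List.
From Stdlib Require Import Classical ClassicalEpsilon FunctionalExtensionality.
From Coquelicot Require Import Coquelicot.
From mathcomp Require all_boot all_order all_algebra Rstruct.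
From mathcomp.real_closed Require complex.
Set Bullet Behavior "Strict Subproofs".

(* The eigenspace D_mu has dimension at most n, since a solution is determined by its
   n initial values (an energy estimate), and it is invariant under the shift
   T u = u(. + b): the coefficients are b-periodic, and a solution vanishing at
   0, b, ..., (n-1)b also vanishes at nb, for otherwise solutions vanishing at the first
   k grid points but not at the k-th one (k <= n) would be n+1 independent solutions.
   A finite-dimensional T-invariant space is spanned by generalized eigenvectors of T
   (Fitting decomposition for T - a, by induction on the dimension), so a maximal
   independent family of generalized eigenvectors in D_mu is a basis of it. A
   generalized eigenvector u with (T - r)^l u = 0 and (T - r)^(l-1) u <> 0 is a Floquet
   solution of rank l, and psi^(l-1) = (T - r) psi^l stays in D_mu by invariance. *)

Fixpoint horner_list (L : list C) (z : C) : C :=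
  match L with nil => RtoC 0 | cons c L' => Cplus c (Cmult z (horner_list L' z)) end.

(* Polynomial algebra over [C] is done in mathcomp's algebraically closed field [R[i]]. *)
Module ComplexAlgebra.
Import all_boot all_order all_algebra Rstruct complex.
Import GRing.Theory Num.Theory.
Local Open Scope ring_scope.

Definition to_Ri (z : C) : Rdefinitions.R[i] := Complex z.1 z.2.
Definition of_Ri (z : Rdefinitions.R[i]) : C := let: Complex a b := z in (a, b).

Lemma of_RiK z : to_Ri (of_Ri z) = z. Proof. by case: z. Qed.
Lemma to_Ri_inj z w : to_Ri z = to_Ri w -> z = w.
Proof. by case: z => a b; case: w => c d [-> ->]. Qed.
Lemma to_RiD z w : to_Ri (Cplus z w) = to_Ri z + to_Ri w.
Proof. by case: z => a b; case: w => c d. Qed.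
Lemma to_RiM z w : to_Ri (Cmult z w) = to_Ri z * to_Ri w.
Proof. by case: z => a b; case: w => c d. Qed.
Lemma to_Ri0 : to_Ri (RtoC 0) = 0. Proof. by []. Qed.

Lemma to_Ri_csum f m : to_Ri (csum f m) = \sum_(i < m) to_Ri (f i).
Proof. by elim: m => [|m IH]; rewrite ?big_ord0 // big_ord_recr /= to_RiD IH. Qed.

Lemma to_Ri_horner_list L z : to_Ri (horner_list L z) = horner_rec (map to_Ri L) (to_Ri z).
Proof. by elim: L => [|c L IH] //=; rewrite to_RiD to_RiM IH addrC mulrC. Qed.

Lemma horner_list_root c L : (exists x, List.In x L /\ x <> RtoC 0) ->
  exists z, horner_list (c :: L) z = RtoC 0.
Proof.
move=> [x [Hin Hx]].
have [y Hy] : exists y, root (Poly (map to_Ri (c :: L))) y.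
  apply/closed_rootP/negP => /eqP Hs.
  have [j [Hj Hnth]] := In_nth L x (RtoC 0) Hin.
  have nthE (s : seq C) k : seq.nth (RtoC 0) s k = List.nth k s (RtoC 0).
    by elim: s k => [|a s IH] [|k] //=; apply: IH.
  have sizeE (s : seq C) : seq.size s = List.length s by elim: s => //= ? ? ->.
  have := coef_Poly (map to_Ri (c :: L)) j.+1.
  rewrite nth_default ?Hs // /= (nth_map (RtoC 0)); last by rewrite sizeE; apply/ltP.
  move=> H; apply: Hx; rewrite -Hnth -nthE; apply: to_Ri_inj; by rewrite -H.
exists (of_Ri y); apply: to_Ri_inj.
by rewrite to_Ri_horner_list of_RiK -horner_Poly; apply/rootP.
Qed.

Lemma exists_nontrivial_relation n m (v : nat -> nat -> C) : lt n m ->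
  exists c : nat -> C, (exists i, lt i m /\ c i <> RtoC 0) /\
    forall k, lt k n -> csum (fun i => Cmult (c i) (v i k)) m = RtoC 0.
Proof.
case: m => [|m] /ltP // ltnm.
pose A : 'M[Rdefinitions.R[i]]_(m.+1, n) := \matrix_(i, k) to_Ri (v i k).
have : kermx A != 0.
  rewrite kermx_eq0 /row_free; apply: contraTneq (rank_leq_col A) => ->.
  by rewrite -ltnNge.
move=> /rowV0Pn [w /sub_kermxP wA0 w0].
have [j wj0] : exists j, w 0 j != 0.
  apply/existsP; apply: contraNT w0 => /existsPn wj0.
  by apply/eqP/rowP => j; rewrite mxE; apply/eqP/negbNE.
exists (fun i => of_Ri (w 0 (inord i))); split.
  exists j; split; first exact/ltP; move=> /(f_equal to_Ri); rewrite of_RiK inord_val => wj.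
  by move/eqP: wj0; apply.
move=> k /ltP ltkn; apply: to_Ri_inj; rewrite to_Ri_csum to_Ri0.
transitivity ((w *m A) 0 (Ordinal ltkn)); last by rewrite wA0 mxE.
by rewrite mxE; apply: eq_bigr => i _; rewrite to_RiM of_RiK inord_val mxE.
Qed.
End ComplexAlgebra.

Open Scope C_scope.

Lemma csum_ext (f g : nat -> C) m :
  (forall i, (i < m)%nat -> f i = g i) -> csum f m = csum g m.
Proof.
  induction m as [|m IH]; intros H; simpl; auto.
  rewrite IH, (H m) by (intros; try apply H; lia). reflexivity.
Qed.

Lemma csum_add (f g : nat -> C) m : csum (fun i => f i + g i) m = csum f m + csum g m.
Proof. induction m; simpl; [ring | rewrite IHm; ring]. Qed.

Lemma csum_scal (a : C) (f : nat -> C) m : csum (fun i => a * f i) m = a * csum f m.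
Proof. induction m; simpl; [ring | rewrite IHm; ring]. Qed.

Lemma csum_eq0 (f : nat -> C) m : (forall i, (i < m)%nat -> f i = 0) -> csum f m = 0.
Proof.
  induction m as [|m IH]; intros H; simpl; auto.
  rewrite IH, (H m) by (intros; try apply H; lia). ring.
Qed.

Lemma csum_single (f : nat -> C) m i0 : (i0 < m)%nat ->
  (forall i, (i < m)%nat -> i <> i0 -> f i = 0) -> csum f m = f i0.
Proof.
  induction m as [|m IH]; intros Hi H; [lia|]; simpl.
  destruct (Nat.eq_dec i0 m) as [->|Hne].
  - rewrite csum_eq0 by (intros; try apply H; lia). ring.
  - rewrite IH, (H m) by (auto; lia). ring.
Qed.

Lemma csum_recl (f : nat -> C) m : csum f (S m) = f 0%nat + csum (fun i => f (S i)) m.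
Proof. induction m; simpl in *; [ring | rewrite IHm; ring]. Qed.

Lemma csum_swap (F : nat -> nat -> C) n m :
  csum (fun k => csum (fun i => F i k) m) n = csum (fun i => csum (fun k => F i k) n) m.
Proof.
  induction n; simpl.
  - symmetry; apply csum_eq0; auto.
  - rewrite IHn, <- csum_add. reflexivity.
Qed.

Lemma Cmult_eq0_nonzero_r (a z : C) : a * z = 0 -> z <> 0 -> a = 0.
Proof.
  intros H Hz. destruct (Ceq_dec a 0) as [|Ha]; auto.
  exfalso; apply Hz. replace z with (/ a * (a * z)) by (field; auto). rewrite H. ring.
Qed.

Lemma C1_neq_C0 : RtoC 1 <> RtoC 0.
Proof. intros E. injection E. apply R1_neq_R0. Qed.

Definition fzero : R -> C := fun _ => 0.
Definition fadd (u v : R -> C) : R -> C := fun x => u x + v x.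
Definition fscale (a : C) (u : R -> C) : R -> C := fun x => a * u x.
Definition lcomb (c : nat -> C) (f : nat -> R -> C) m : R -> C :=
  fun x => csum (fun i => c i * f i x) m.
Definition nonzero (u : R -> C) := exists x, u x <> 0.

Definition subspace (W : (R -> C) -> Prop) :=
  W fzero /\ (forall u v, W u -> W v -> W (fadd u v)) /\ (forall a u, W u -> W (fscale a u)).
Definition family (W : (R -> C) -> Prop) (f : nat -> R -> C) m :=
  forall i, (i < m)%nat -> W (f i).
Definition independent (f : nat -> R -> C) m :=
  forall c : nat -> C, (forall x, lcomb c f m x = 0) -> forall i, (i < m)%nat -> c i = 0.
Definition dim_le (W : (R -> C) -> Prop) N :=
  forall f, family W f (S N) -> ~ independent f (S N).

Lemma fzero_or_nonzero u : u = fzero \/ nonzero u.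
Proof.
  destruct (classic (nonzero u)) as [|Hu]; auto. left.
  apply functional_extensionality; intros x. apply NNPP; intros Hx. apply Hu; exists x; auto.
Qed.

Lemma lcomb_S c f m : lcomb c f (S m) = fadd (lcomb c f m) (fscale (c m) (f m)).
Proof. reflexivity. Qed.

Lemma subspace_lcomb W c f m : subspace W -> family W f m -> W (lcomb c f m).
Proof.
  intros (H0 & Hadd & Hscal) Hf. induction m as [|m IH]; [exact H0|].
  rewrite lcomb_S. apply Hadd; [apply IH; intros i Hi | apply Hscal]; apply Hf; lia.
Qed.

Lemma subspace_fsub W u v : subspace W -> W u -> W v -> W (fadd u (fscale (-1) v)).
Proof. intros (_ & Hadd & Hscal) Hu Hv. auto. Qed.

Lemma independent_nonzero f m i : independent f m -> (i < m)%nat -> nonzero (f i).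
Proof.
  intros Hind Hi. destruct (fzero_or_nonzero (f i)) as [Hz|]; auto. exfalso.
  apply C1_neq_C0.
  transitivity (if Nat.eqb i i then RtoC 1 else RtoC 0); [now rewrite Nat.eqb_refl|].
  apply (Hind (fun j => if Nat.eqb j i then RtoC 1 else RtoC 0)); auto.
  intros x. apply csum_eq0. intros j Hj.
  destruct (Nat.eqb_spec j i) as [->|]; [rewrite Hz; unfold fzero |]; ring.
Qed.

Lemma dim_le_sub V W N : (forall u, V u -> W u) -> dim_le W N -> dim_le V N.
Proof. intros HVW HW f Hf. apply HW. intros i Hi. apply HVW, Hf, Hi. Qed.

Lemma dim_le_0 W u : dim_le W 0 -> W u -> u = fzero.
Proof.
  intros HW Hu. destruct (fzero_or_nonzero u) as [|[x0 Hx0]]; auto. exfalso.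
  apply (HW (fun _ => u)); [intros i _; exact Hu|].
  intros c Hc i Hi. replace i with 0%nat by lia.
  specialize (Hc x0). unfold lcomb in Hc; simpl in Hc. rewrite Cplus_0_l in Hc.
  exact (Cmult_eq0_nonzero_r _ _ Hc Hx0).
Qed.

(* The last conjunct says that the family cannot be extended inside W. *)
Lemma exists_maximal_independent W N : dim_le W N ->
  exists m f, family W f m /\ independent f m /\ dim_le W m.
Proof.
  intros HW.
  set (Q := fun m => exists f, family W f m /\ independent f m).
  assert (Hup : forall d k, Q k -> (k + d = S N)%nat -> exists m, Q m /\ ~ Q (S m)).
  { induction d as [|d IH]; intros k Hk Hkd.
    - rewrite Nat.add_0_r in Hkd; subst k.
      destruct Hk as [f [Hf Hi]]. exfalso. exact (HW f Hf Hi).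
    - destruct (classic (Q (S k))) as [HQ|HQ]; [apply (IH (S k)); auto; lia | eauto]. }
  destruct (Hup (S N) 0%nat) as [m [[f [Hf Hi]] Hmax]].
  - exists (fun _ => fzero). split; intros ? ?; lia.
  - lia.
  - exists m, f. repeat split; auto. intros g Hg Hig. apply Hmax. exists g; auto.
Qed.

Definition snoc (f : nat -> R -> C) m (u : R -> C) : nat -> R -> C :=
  fun i => if Nat.eqb i m then u else f i.

Lemma lcomb_snoc c f m u x : lcomb c (snoc f m u) (S m) x = lcomb c f m x + c m * u x.
Proof.
  unfold lcomb. simpl. unfold snoc at 2. rewrite Nat.eqb_refl. f_equal.
  apply csum_ext. intros i Hi. unfold snoc. destruct (Nat.eqb_spec i m); auto; lia.
Qed.

Lemma family_snoc W f m u : family W f m -> W u -> family W (snoc f m u) (S m).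
Proof. intros Hf Hu i Hi. unfold snoc. destruct (Nat.eqb_spec i m); auto. apply Hf; lia. Qed.

Lemma maximal_independent_spans W f m u :
  family W f m -> independent f m -> dim_le W m -> W u ->
  exists c, u = lcomb c f m.
Proof.
  intros Hf Hind Hmax Hu.
  destruct (not_all_ex_not _ _ (Hmax _ (family_snoc W f m u Hf Hu))) as [c Hc].
  apply imply_to_and in Hc as [Hrel Hc].
  setoid_rewrite lcomb_snoc in Hrel.
  assert (Hcm : c m <> 0).
  { intros Hcm. apply Hc. intros i Hi.
    destruct (Nat.eq_dec i m) as [->|]; auto. apply Hind; [|lia].
    intros x. rewrite <- (Hrel x), Hcm. ring. }
  exists (fun i => - c i / c m). apply functional_extensionality; intros x.
  specialize (Hrel x). unfold lcomb in *.
  rewrite (csum_ext _ (fun i => (- / c m) * (c i * f i x))) by (intros; unfold Cdiv; ring).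
  rewrite csum_scal.
  replace (csum (fun i => c i * f i x) m) with (- (c m * u x))
    by (rewrite <- (Cplus_0_l (- (c m * u x))), <- Hrel; ring).
  field. exact Hcm.
Qed.

Lemma dim_le_avoiding W V N e : subspace V -> (forall v, V v -> W v) -> W e -> ~ V e ->
  dim_le W (S N) -> dim_le V N.
Proof.
  intros HV HVW He HeV HW g Hg Hind.
  apply (HW _ (family_snoc W g (S N) e (fun i Hi => HVW _ (Hg i Hi)) He)).
  intros c Hrel. setoid_rewrite lcomb_snoc in Hrel.
  assert (Hc : c (S N) = 0).
  { apply NNPP; intros Hc. apply HeV.
    replace e with (fscale (- / c (S N)) (lcomb c g (S N))).
    - apply HV, subspace_lcomb; auto.
    - apply functional_extensionality; intros x. unfold fscale.
      replace (lcomb c g (S N) x) with (- (c (S N) * e x))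
        by (rewrite <- (Cplus_0_l (- (c (S N) * e x))), <- (Hrel x); ring).
      field. exact Hc. }
  intros i Hi. destruct (Nat.eq_dec i (S N)) as [->|]; auto.
  apply Hind; [|lia]. intros x. rewrite <- (Hrel x), Hc. ring.
Qed.

Lemma independent_triangular (g : nat -> R -> C) (x : nat -> R) m :
  (forall k j, (j < k < m)%nat -> g k (x j) = 0) -> (forall k, (k < m)%nat -> g k (x k) <> 0) ->
  independent g m.
Proof.
  intros Hlow Hdiag c Hc i. induction i as [i IH] using lt_wf_ind. intros Hi.
  specialize (Hc (x i)). unfold lcomb in Hc. rewrite (csum_single _ _ i) in Hc; auto.
  - exact (Cmult_eq0_nonzero_r _ _ Hc (Hdiag i Hi)).
  - intros j Hj Hji. destruct (lt_dec j i).
    + rewrite IH by auto. ring.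
    + rewrite Hlow by lia. ring.
Qed.

Inductive spanned (S : (R -> C) -> Prop) : (R -> C) -> Prop :=
  | spanned_zero : spanned S fzero
  | spanned_step u a s : spanned S u -> S s -> spanned S (fadd u (fscale a s)).

Lemma spanned_mono (S S' : (R -> C) -> Prop) u :
  (forall s, S s -> S' s) -> spanned S u -> spanned S' u.
Proof. intros HS Hu. induction Hu; constructor; auto. Qed.

Lemma spanned_in S s : S s -> spanned S s.
Proof.
  intros Hs. replace s with (fadd fzero (fscale 1 s)) by
    (apply functional_extensionality; intros x; unfold fadd, fscale, fzero; ring).
  constructor; [constructor | exact Hs].
Qed.

Lemma spanned_add S u v : spanned S u -> spanned S v -> spanned S (fadd u v).
Proof.
  intros Hu Hv. induction Hv as [|v a s Hv IH Hs].
  - replace (fadd u fzero) with u; auto.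
    apply functional_extensionality; intros x; unfold fadd, fzero; ring.
  - replace (fadd u (fadd v (fscale a s))) with (fadd (fadd u v) (fscale a s)).
    + constructor; auto.
    + apply functional_extensionality; intros x; unfold fadd; ring.
Qed.

Lemma spanned_lcomb S f m u : (forall s, S s -> exists c, s = lcomb c f m) ->
  spanned S u -> exists c, u = lcomb c f m.
Proof.
  intros Hf Hu. induction Hu as [|u a s Hu [c Hc] Hs].
  - exists (fun _ => 0). apply functional_extensionality; intros x.
    symmetry; apply csum_eq0; intros; ring.
  - destruct (Hf s Hs) as [c' Hc']. exists (fun i => c i + a * c' i).
    subst. apply functional_extensionality; intros x. unfold fadd, fscale, lcomb.
    rewrite <- csum_scal, <- csum_add. apply csum_ext; intros; ring.
Qed.

Definition linear_op (L : (R -> C) -> R -> C) :=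
  (forall u v, L (fadd u v) = fadd (L u) (L v)) /\ (forall a u, L (fscale a u) = fscale a (L u)).
Definition stable (W : (R -> C) -> Prop) (L : (R -> C) -> R -> C) := forall u, W u -> W (L u).
Definition image (W : (R -> C) -> Prop) (L : (R -> C) -> R -> C) (v : R -> C) :=
  exists w, W w /\ v = L w.

Lemma linear_op_fzero L : linear_op L -> L fzero = fzero.
Proof.
  intros [_ Hscal].
  replace fzero with (fscale 0 fzero) by
    (apply functional_extensionality; intros x; unfold fscale, fzero; ring).
  rewrite Hscal. apply functional_extensionality; intros x; unfold fscale, fzero; ring.
Qed.

Lemma linear_op_lcomb L c f m : linear_op L -> L (lcomb c f m) = lcomb c (fun i => L (f i)) m.
Proof.
  intros HL. induction m as [|m IH]; [exact (linear_op_fzero L HL)|].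
  rewrite !lcomb_S, (proj1 HL), (proj2 HL), IH. reflexivity.
Qed.

Lemma linear_op_iter L k : linear_op L -> linear_op (Nat.iter k L).
Proof.
  intros HL. induction k as [|k [IHadd IHscal]]; [split; reflexivity|].
  split; intros; simpl; [rewrite IHadd | rewrite IHscal]; apply HL.
Qed.

Lemma stable_iter W L k : stable W L -> stable W (Nat.iter k L).
Proof. intros HL u Hu. induction k; simpl; auto. Qed.

Lemma subspace_image W L : linear_op L -> subspace W -> subspace (image W L).
Proof.
  intros [Ladd Lscal] (H0 & Hadd & Hscal). repeat split.
  - exists fzero. split; auto. symmetry. apply linear_op_fzero. split; auto.
  - intros u v [w1 [Hw1 ->]] [w2 [Hw2 ->]]. exists (fadd w1 w2). split; auto.
  - intros a u [w [Hw ->]]. exists (fscale a w). split; auto.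
Qed.

Lemma image_sub W L v : stable W L -> image W L v -> W v.
Proof. intros HL [w [Hw ->]]. auto. Qed.

Lemma stable_image W L K : stable W K -> (forall u, K (L u) = L (K u)) ->
  stable (image W L) K.
Proof. intros HK Hcomm v [w [Hw ->]]. exists (K w). split; auto. Qed.

Lemma exists_nilpotency_index L u k : Nat.iter k L u = fzero -> nonzero u ->
  exists l, Nat.iter (S l) L u = fzero /\ nonzero (Nat.iter l L u).
Proof.
  intros Hk Hu. induction k as [|k IH].
  - destruct Hu as [x Hx]. exfalso. apply Hx. simpl in Hk. rewrite Hk. reflexivity.
  - destruct (fzero_or_nonzero (Nat.iter k L u)) as [Hz|Hnz]; eauto.
Qed.

Section NilpotentPart.

Variables (L : (R -> C) -> R -> C) (W : (R -> C) -> Prop) (N : nat).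
Hypotheses (HL : linear_op L) (HW : subspace W) (HWL : stable W L) (Hdim : dim_le W N).

(* Otherwise u, L u, ..., L^N u would be N+1 independent elements of W. *)
Lemma iter_S_eq0 u : W u -> Nat.iter (S N) L u = fzero -> Nat.iter N L u = fzero.
Proof.
  intros Hu HSN. destruct (fzero_or_nonzero (Nat.iter N L u)) as [|[x0 Hx0]]; auto. exfalso.
  assert (Hhigh : forall k, (N < k)%nat -> Nat.iter k L u = fzero).
  { intros k Hk. replace k with (k - S N + S N)%nat by lia.
    rewrite Nat.iter_add, HSN. apply linear_op_fzero, linear_op_iter, HL. }
  apply (Hdim (fun i => Nat.iter i L u)); [intros i _; apply stable_iter; auto|].
  intros c Hc i. induction i as [i IH] using lt_wf_ind. intros Hi.
  assert (Hrel := f_equal (fun v => Nat.iter (N - i) L v x0) (functional_extensionality _ _ Hc)).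
  simpl in Hrel. rewrite linear_op_lcomb in Hrel by (apply linear_op_iter, HL).
  unfold lcomb, fzero in Hrel. rewrite (linear_op_fzero _ (linear_op_iter _ _ HL)) in Hrel.
  rewrite (csum_single _ _ i) in Hrel; auto.
  - rewrite <- Nat.iter_add in Hrel. replace (N - i + i)%nat with N in Hrel by lia.
    exact (Cmult_eq0_nonzero_r _ _ Hrel Hx0).
  - intros j Hj Hji. destruct (lt_dec j i).
    + rewrite IH by auto. ring.
    + rewrite <- Nat.iter_add, Hhigh by lia. unfold fzero. ring.
Qed.

Lemma iter_eq0_le u k : W u -> Nat.iter k L u = fzero -> Nat.iter N L u = fzero.
Proof.
  revert u. induction k as [|k IH]; intros u Hu Hk.
  - simpl in Hk. subst u. apply linear_op_fzero, linear_op_iter, HL.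
  - apply iter_S_eq0; auto. rewrite Nat.iter_succ_r. apply IH; auto.
    rewrite <- Nat.iter_succ_r. exact Hk.
Qed.

Lemma image_iter_injective w : W w ->
  Nat.iter N L (Nat.iter N L w) = fzero -> Nat.iter N L w = fzero.
Proof.
  intros Hw H. apply (iter_eq0_le w (N + N)); auto. rewrite Nat.iter_add. exact H.
Qed.

(* L^N is injective on its image, hence maps it onto itself by finite dimension:
   L^N u = L^N (L^N w) for some w, and u - L^N w lies in the kernel of L^N. *)
Lemma fitting_decomposition u : W u -> exists k w,
  W k /\ Nat.iter N L k = fzero /\ W w /\ u = fadd k (Nat.iter N L w).
Proof.
  intros Hu.
  set (P := Nat.iter N L). set (I := image W P).
  assert (HP : linear_op P) by apply linear_op_iter, HL.
  assert (HWP : stable W P) by apply stable_iter, HWL.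
  assert (HI : subspace I) by (apply subspace_image; auto).
  assert (HIW : forall v, I v -> W v) by (intros v; apply image_sub, HWP).
  destruct (exists_maximal_independent I N (dim_le_sub I W N HIW Hdim))
    as [m [f [Hf [Hind Hmax]]]].
  assert (HPf : family I (fun i => P (f i)) m).
  { intros i Hi. exists (f i). split; auto. }
  assert (HPind : independent (fun i => P (f i)) m).
  { intros c Hc. apply Hind. intros x.
    destruct (subspace_lcomb I c f m HI Hf) as [w [Hw Hlc]].
    assert (HPw : P w = fzero).
    { apply image_iter_injective; auto. change (P (P w) = fzero).
      rewrite <- Hlc, linear_op_lcomb by exact HP. apply functional_extensionality, Hc. }
    rewrite Hlc, HPw. reflexivity. }
  destruct (maximal_independent_spans I _ m (P u) HPf HPind Hmax) as [c Hc].
  { exists u. split; auto. }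
  destruct (subspace_lcomb I c f m HI Hf) as [w [Hw Hlc]].
  exists (fadd u (fscale (-1) (P w))), w. repeat split; auto.
  - apply subspace_fsub; auto.
  - rewrite (proj1 HP), (proj2 HP), Hc, <- linear_op_lcomb, Hlc by exact HP.
    apply functional_extensionality; intros x. unfold fadd, fscale, fzero. ring.
  - apply functional_extensionality; intros x. unfold fadd, fscale. ring.
Qed.

End NilpotentPart.

Section Shift.

Variable b : R.

Definition shift (u : R -> C) : R -> C := fun x => u (x + b)%R.
Definition shift_sub (a : C) (u : R -> C) : R -> C := fun x => u (x + b)%R - a * u x.
Definition gen_eigen (u : R -> C) := exists a k, Nat.iter k (shift_sub a) u = fzero.

Lemma linear_shift_sub a : linear_op (shift_sub a).
Proof.
  split; intros; apply functional_extensionality; intros x;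
    unfold shift_sub, fadd, fscale; ring.
Qed.

Lemma stable_shift_sub W a : subspace W -> stable W shift -> stable W (shift_sub a).
Proof.
  intros (_ & Hadd & Hscal) Hsh u Hu.
  replace (shift_sub a u) with (fadd (shift u) (fscale (- a) u)); auto.
  apply functional_extensionality; intros x; unfold shift_sub, shift, fadd, fscale; ring.
Qed.

Lemma iter_shift_sub_shift k a u :
  Nat.iter k (shift_sub a) (shift u) = shift (Nat.iter k (shift_sub a) u).
Proof. induction k as [|k IH]; simpl; [|rewrite IH]; reflexivity. Qed.

Fixpoint shift_poly (L : list C) (w : R -> C) : R -> C :=
  match L with
  | nil => fzero
  | cons c L' => fadd (fscale c w) (shift (shift_poly L' w))
  end.

Fixpoint horner_div (a : C) (L : list C) : list C * C :=
  match L with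
  | nil => (nil, RtoC 0)
  | cons c nil => (nil, c)
  | cons c L' => let (Q, r) := horner_div a L' in (cons r Q, c + a * r)
  end.

Lemma horner_div_cons a c c' L :
  horner_div a (c :: c' :: L) = let (Q, r) := horner_div a (c' :: L) in (cons r Q, c + a * r).
Proof. reflexivity. Qed.

Lemma shift_poly_horner_div a L w :
  shift_poly L w =
  fadd (shift_sub a (shift_poly (fst (horner_div a L)) w)) (fscale (snd (horner_div a L)) w).
Proof.
  apply functional_extensionality; intros x. revert x.
  induction L as [|c [|c' L] IH]; intros x.
  - unfold fadd, fscale, shift_sub, fzero; simpl; unfold fzero. ring.
  - unfold fadd, fscale, shift_sub, shift, fzero; simpl; unfold fadd, fscale, shift, fzero. ring.
  - rewrite horner_div_cons. destruct (horner_div a (c' :: L)) as [Q r].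
    change (c * w x + shift_poly (c' :: L) w (x + b)%R =
      shift_poly (r :: Q) w (x + b)%R - a * shift_poly (r :: Q) w x + (c + a * r) * w x).
    rewrite IH. unfold fadd, fscale, shift_sub, shift. simpl. unfold fadd, fscale, shift. ring.
Qed.

Lemma horner_list_div a L z :
  horner_list L z = (z - a) * horner_list (fst (horner_div a L)) z + snd (horner_div a L).
Proof.
  induction L as [|c [|c' L] IH]; [simpl; ring | simpl; ring |].
  rewrite horner_div_cons. destruct (horner_div a (c' :: L)) as [Q r]. simpl in IH |- *.
  rewrite IH. ring.
Qed.

Lemma horner_div_length a L : length (fst (horner_div a L)) = pred (length L).
Proof.
  induction L as [|c [|c' L] IH]; auto.
  rewrite horner_div_cons. destruct (horner_div a (c' :: L)) as [Q r]. simpl in IH |- *. lia.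
Qed.

Lemma horner_div_quotient_zero a L : List.Forall (fun y => y = RtoC 0) (fst (horner_div a L)) ->
  List.Forall (fun y => y = RtoC 0) (tl L) /\ snd (horner_div a L) = hd (RtoC 0) L.
Proof.
  induction L as [|c [|c' L] IH]; [simpl; auto | simpl; auto |].
  rewrite horner_div_cons. destruct (horner_div a (c' :: L)) as [Q r]. simpl in IH |- *.
  intros HF. inversion HF as [|? ? Hr HQ]; subst.
  destruct (IH HQ) as [HL Hc']. subst c'. split; [constructor; auto | ring].
Qed.

Lemma shift_poly_zeros L w : List.Forall (fun y => y = RtoC 0) L -> shift_poly L w = fzero.
Proof.
  induction 1 as [|c L Hc _ IH]; simpl; auto. rewrite IH, Hc.
  apply functional_extensionality; intros x; unfold fadd, fscale, shift, fzero; ring.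
Qed.

Lemma shift_poly_in W L w : subspace W -> stable W shift -> W w -> W (shift_poly L w).
Proof.
  intros (H0 & Hadd & Hscal) Hsh Hw. induction L; simpl; auto.
Qed.

Lemma shift_poly_seq c w m k : shift_poly (map c (seq k m)) w =
  lcomb (fun i => c (k + i)%nat) (fun i => Nat.iter i shift w) m.
Proof.
  revert k. induction m as [|m IH]; intros k; [reflexivity|].
  simpl. rewrite IH. apply functional_extensionality; intros x.
  unfold lcomb. rewrite csum_recl. unfold fadd, fscale, shift. simpl. rewrite Nat.add_0_r.
  f_equal. apply csum_ext. intros i Hi. rewrite <- plus_n_Sm. reflexivity.
Qed.

(* Factor out a root a of the polynomial: either the quotient still annihilates w and we
   recurse, or its value at w is an eigenvector of T for a. *)
Lemma shift_poly_eigenvector W w : subspace W -> stable W shift -> W w -> nonzero w ->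
  forall L : list C, (exists y, In y L /\ y <> 0) -> shift_poly L w = fzero ->
  exists a e, W e /\ nonzero e /\ shift_sub a e = fzero.
Proof.
  intros HW Hsh Hw [x0 Hx0] L. remember (length L) as len eqn:Hlen. revert L Hlen.
  induction len as [len IH] using lt_wf_ind. intros [|c L] Hlen Hy Hz;
    [destruct Hy as [y [[] _]]|].
  destruct (classic (exists y, In y L /\ y <> 0)) as [HL|HL].
  - destruct (ComplexAlgebra.horner_list_root c L HL) as [a Ha].
    set (Q := fst (horner_div a (c :: L))).
    assert (Hr : snd (horner_div a (c :: L)) = 0).
    { rewrite <- Ha, (horner_list_div a (c :: L) a). ring. }
    assert (HzQ : shift_sub a (shift_poly Q w) = fzero).
    { rewrite <- Hz, (shift_poly_horner_div a (c :: L) w), Hr. fold Q.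
      apply functional_extensionality; intros x; unfold fadd, fscale; ring. }
    destruct (fzero_or_nonzero (shift_poly Q w)) as [HQ|HQ].
    + apply (IH (length Q)) with Q; auto.
      * unfold Q. rewrite horner_div_length. simpl in *. lia.
      * apply NNPP; intros HnQ.
        assert (HF : List.Forall (fun y => y = RtoC 0) Q).
        { apply Forall_forall. intros y Hy'. apply NNPP; intros Hy''. apply HnQ; eauto. }
        destruct (horner_div_quotient_zero a (c :: L) HF) as [HL0 _].
        destruct HL as [y [Hy1 Hy2]]. rewrite Forall_forall in HL0. apply Hy2, HL0, Hy1.
    + exists a, (shift_poly Q w). repeat split; auto.
      apply shift_poly_in; auto.
  - exfalso.
    assert (HF : List.Forall (fun y => y = RtoC 0) L).
    { apply Forall_forall. intros y Hy'. apply NNPP; intros Hy''. apply HL; eauto. }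
    assert (Hc : c <> 0).
    { destruct Hy as [y [[<-|Hy1] Hy2]]; auto. exfalso; apply HL; eauto. }
    apply Hc, (Cmult_eq0_nonzero_r _ (w x0)); auto.
    assert (H := f_equal (fun u => u x0) Hz). simpl in H.
    rewrite (shift_poly_zeros L w HF) in H. unfold fadd, fscale, shift, fzero in H.
    rewrite <- H. ring.
Qed.

Lemma shift_eigenvector W N w : subspace W -> stable W shift -> dim_le W N -> W w -> nonzero w ->
  exists a e, W e /\ nonzero e /\ shift_sub a e = fzero.
Proof.
  intros HW Hsh Hdim Hw Hnz.
  assert (Hfam : family W (fun i => Nat.iter i shift w) (S N)).
  { intros i _. induction i; simpl; auto. }
  destruct (not_all_ex_not _ _ (Hdim _ Hfam)) as [c Hc].
  apply imply_to_and in Hc as [Hrel Hc].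
  apply not_all_ex_not in Hc as [i Hc]. apply imply_to_and in Hc as [Hi Hci].
  apply (shift_poly_eigenvector W w HW Hsh Hw Hnz (map c (seq 0 (S N)))).
  - exists (c i). split; auto. apply in_map, in_seq. lia.
  - rewrite shift_poly_seq. apply functional_extensionality, Hrel.
Qed.

(* With a an eigenvalue of T on W, the image of (T - a)^N is T-stable and of smaller
   dimension, as it misses the eigenvector. *)
Lemma spanned_gen_eigen N : forall W, subspace W -> stable W shift -> dim_le W N ->
  forall u, W u -> spanned (fun v => W v /\ gen_eigen v) u.
Proof.
  induction N as [|N IH]; intros W HW Hsh Hdim u Hu.
  { rewrite (dim_le_0 W u Hdim Hu). constructor. }
  destruct (fzero_or_nonzero u) as [->|Hnz]; [constructor|].
  destruct (shift_eigenvector W (S N) u HW Hsh Hdim Hu Hnz) as [a [e [He [[x0 Hx0] Hae]]]].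
  set (P := Nat.iter (S N) (shift_sub a)).
  assert (HP : linear_op P) by apply linear_op_iter, linear_shift_sub.
  assert (HWa : stable W (shift_sub a)) by (apply stable_shift_sub; auto).
  assert (HWP : stable W P) by apply stable_iter, HWa.
  destruct (fitting_decomposition (shift_sub a) W (S N) (linear_shift_sub a) HW HWa Hdim u Hu)
    as [k [w [Hk [HPk [Hw ->]]]]].
  apply spanned_add.
  - apply spanned_in. split; [exact Hk | exists a, (S N); exact HPk].
  - apply (spanned_mono (fun v => image W P v /\ gen_eigen v)).
    { intros v [Hv Hg]. split; auto. apply (image_sub W P); auto. }
    apply IH.
    + apply subspace_image; auto.
    + apply stable_image; auto. intros v. symmetry. apply iter_shift_sub_shift.
    + apply (dim_le_avoiding W _ N e); auto using subspace_image.
      * intros v. apply image_sub, HWP.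
      * intros [w' [Hw' He']]. apply Hx0.
        assert (HPe : P e = fzero).
        { unfold P. rewrite Nat.iter_succ_r, Hae.
          apply linear_op_fzero, linear_op_iter, linear_shift_sub. }
        assert (HPw' : P w' = fzero).
        { apply (image_iter_injective (shift_sub a) W (S N)); auto using linear_shift_sub.
          change (P (P w') = fzero). rewrite <- He'. exact HPe. }
        rewrite He', HPw'. reflexivity.
    + exists w. split; auto.
Qed.

End Shift.

Lemma is_derive_Re (f : R -> C) x l : is_derive f x l -> is_derive (fun t => fst (f t)) x (fst l).
Proof.
  intros H. eapply filterdiff_ext_lin.
  - apply (filterdiff_comp' f (fun t : C => fst t) x _ (fun t : C => fst t) H).
    apply filterdiff_linear, is_linear_fst.
  - reflexivity.
Qed.

Lemma is_derive_Im (f : R -> C) x l : is_derive f x l -> is_derive (fun t => snd (f t)) x (snd l).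
Proof.
  intros H. eapply filterdiff_ext_lin.
  - apply (filterdiff_comp' f (fun t : C => snd t) x _ (fun t : C => snd t) H).
    apply filterdiff_linear, is_linear_snd.
  - reflexivity.
Qed.

Lemma is_derive_ReIm (f : R -> C) x l : is_derive (fun t => fst (f t)) x (fst l) ->
  is_derive (fun t => snd (f t)) x (snd l) -> is_derive f x l.
Proof.
  intros H1 H2.
  assert (H := @is_derive_plus R_AbsRing (prod_NormedModule R_AbsRing R_NormedModule R_NormedModule)
     (fun t => scal (fst (f t)) ((1%R, 0%R) : C)) (fun t => scal (snd (f t)) ((0%R, 1%R) : C)) x _ _
     (is_derive_scal_l _ _ _ _ H1) (is_derive_scal_l _ _ _ _ H2)).
  replace l with (plus (scal (fst l) ((1%R, 0%R) : C)) (scal (snd l) ((0%R, 1%R) : C))).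
  - eapply is_derive_ext; [|exact H]. intros t. simpl. destruct (f t) as [a c].
    unfold scal, plus; simpl. unfold prod_scal, prod_plus, scal, plus; simpl. unfold mult; simpl.
    f_equal; ring.
  - destruct l as [a c]. unfold scal, plus; simpl. unfold prod_scal, prod_plus, scal, plus; simpl.
    unfold mult; simpl. f_equal; ring.
Qed.

Lemma is_derive_Cmult_l (f : R -> C) x l c :
  is_derive f x l -> is_derive (fun t => c * f t) x (c * l).
Proof.
  intros H. destruct c as [c1 c2].
  assert (Hlin : forall a e v, v = (a * fst l + e * snd l)%R ->
    is_derive (fun t => a * fst (f t) + e * snd (f t))%R x v).
  { intros a e v ->.
    apply (is_derive_plus (fun t => a * fst (f t))%R (fun t => e * snd (f t))%R);
      apply is_derive_scal; [apply is_derive_Re | apply is_derive_Im]; exact H. }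
  apply is_derive_ReIm.
  - eapply is_derive_ext; [|apply (Hlin c1 (- c2)%R)].
    + intros t. simpl. destruct (f t); simpl; ring.
    + destruct l; simpl; ring.
  - eapply is_derive_ext; [|apply (Hlin c2 c1)].
    + intros t. simpl. destruct (f t); simpl; ring.
    + destruct l; simpl; ring.
Qed.

Lemma is_derive_shift (f : R -> C) x l b :
  is_derive f (x + b)%R l -> is_derive (fun t => f (t + b)%R) x l.
Proof.
  intros H.
  assert (Hb : is_derive (fun t : R => (t + b)%R) x 1%R) by (auto_derive; [auto | ring]).
  rewrite <- (scal_one l). exact (is_derive_comp f _ x l 1%R H Hb).
Qed.

Lemma is_derive_csum (F : nat -> R -> C) (G : nat -> C) x m :
  (forall i, (i < m)%nat -> is_derive (F i) x (G i)) ->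
  is_derive (fun t => csum (fun i => F i t) m) x (csum G m).
Proof.
  induction m as [|m IH]; intros H; simpl.
  - exact (@is_derive_const R_AbsRing
             (prod_NormedModule R_AbsRing R_NormedModule R_NormedModule) _ x).
  - apply (is_derive_plus (fun t => csum (fun i => F i t) m) (F m)).
    + apply IH; intros; apply H; lia.
    + apply H; lia.
Qed.

Section Solutions.

Variables (n : nat) (p : nat -> R -> C) (mu : C).

Definition solution_chain (u : R -> C) (d : nat -> R -> C) :=
  deriv_chain u n d /\ forall x, d n x + csum (fun k => p k x * d k x) (n - 1) = mu * u x.

Lemma solution_chain_lcomb (f : nat -> R -> C) (d : nat -> nat -> R -> C) c m :
  (forall i, (i < m)%nat -> solution_chain (f i) (d i)) ->
  solution_chain (lcomb c f m) (fun k x => csum (fun i => c i * d i k x) m).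
Proof.
  intros H. split; [split|].
  - apply functional_extensionality; intros x. apply csum_ext. intros i Hi.
    destruct (H i Hi) as [[-> _] _]. reflexivity.
  - intros k Hk x. apply is_derive_csum. intros i Hi. apply is_derive_Cmult_l.
    destruct (H i Hi) as [[_ Hd] _]. apply Hd, Hk.
  - intros x.
    rewrite (csum_ext (fun k => p k x * csum (fun i => c i * d i k x) m)
       (fun k => csum (fun i => c i * (p k x * d i k x)) m))
      by (intros; rewrite <- csum_scal; apply csum_ext; intros; ring).
    rewrite csum_swap, <- csum_add. unfold lcomb. rewrite <- csum_scal.
    apply csum_ext. intros i Hi. destruct (H i Hi) as [_ Heq].
    rewrite csum_scal, <- Cmult_plus_distr_l, Heq. ring.
Qed.

Lemma subspace_solutions : subspace (is_solution n p mu).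
Proof.
  assert (Hlc : forall c f m, family (is_solution n p mu) f m -> is_solution n p mu (lcomb c f m)).
  { intros c f m Hf.
    destruct (choice (fun i d => (i < m)%nat -> solution_chain (f i) d)) as [d Hd].
    { intros i. destruct (lt_dec i m) as [Hi|Hi].
      - destruct (Hf i Hi) as [d Hd]. exists d. auto.
      - exists (fun _ _ => RtoC 0). intros; lia. }
    eexists. apply (solution_chain_lcomb f d c m Hd). }
  repeat split.
  - apply (Hlc (fun _ => RtoC 0) (fun _ => fzero) 0%nat). intros i Hi; lia.
  - intros u v Hu Hv.
    replace (fadd u v) with (lcomb (fun _ => RtoC 1) (fun i => if Nat.eqb i 0 then u else v) 2).
    + apply Hlc. intros [|i] Hi; simpl; auto.
    + apply functional_extensionality; intros x. unfold lcomb, fadd. simpl. ring.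
  - intros a u Hu.
    replace (fscale a u) with (lcomb (fun _ => a) (fun _ => u) 1).
    + apply Hlc. intros i Hi; auto.
    + apply functional_extensionality; intros x. unfold lcomb, fscale. simpl. ring.
Qed.

Lemma stable_solutions_shift b : (forall k, (k <= n - 2)%nat -> periodic b (p k)) ->
  stable (is_solution n p mu) (shift b).
Proof.
  intros Hp u [d [[H0 Hd] Heq]]. exists (fun k t => d k (t + b)%R). split; [split|].
  - rewrite H0. reflexivity.
  - intros k Hk x. apply is_derive_shift, Hd, Hk.
  - intros x. unfold shift. rewrite <- Heq. f_equal. apply csum_ext. intros k Hk.
    rewrite Hp by lia. reflexivity.
Qed.

End Solutions.

Section Energy.

Open Scope R_scope.

Fixpoint rsum (f : nat -> R) (m : nat) : R :=
  match m with O => 0 | S m' => rsum f m' + f m' end.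

Lemma rsum_le f g m : (forall i, (i < m)%nat -> f i <= g i) -> rsum f m <= rsum g m.
Proof.
  induction m as [|m IH]; simpl; intros H; [lra|].
  assert (rsum f m <= rsum g m) by (apply IH; intros; apply H; lia).
  assert (f m <= g m) by (apply H; lia). lra.
Qed.

Lemma rsum_const c m : rsum (fun _ => c) m = INR m * c.
Proof. induction m as [|m IH]; [simpl; ring|]. rewrite S_INR. simpl. rewrite IH. ring. Qed.

Lemma rsum_nonneg f m : (forall i, (i < m)%nat -> 0 <= f i) -> 0 <= rsum f m.
Proof. intros H. rewrite <- (Rmult_0_r (INR m)), <- rsum_const. apply rsum_le, H. Qed.

Lemma rsum_abs f m : Rabs (rsum f m) <= rsum (fun i => Rabs (f i)) m.
Proof.
  induction m; simpl; [rewrite Rabs_R0; lra|].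
  eapply Rle_trans; [apply Rabs_triang | lra].
Qed.

Lemma rsum_term f m k : (forall i, (i < m)%nat -> 0 <= f i) -> (k < m)%nat -> f k <= rsum f m.
Proof.
  induction m as [|m IH]; intros H Hk; [lia|]. simpl.
  destruct (Nat.eq_dec k m) as [->|].
  - assert (0 <= rsum f m) by (apply rsum_nonneg; intros; apply H; lia). lra.
  - assert (f k <= rsum f m) by (apply IH; [intros; apply H|]; lia).
    assert (0 <= f m) by (apply H; lia). lra.
Qed.

Lemma is_derive_rsum (F : nat -> R -> R) (G : nat -> R) x m :
  (forall i, (i < m)%nat -> is_derive (F i) x (G i)) ->
  is_derive (fun t => rsum (fun i => F i t) m) x (rsum G m).
Proof.
  induction m as [|m IH]; intros H; simpl.
  - apply (is_derive_const (K := R_AbsRing) 0 x).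
  - apply (is_derive_plus (fun t => rsum (fun i => F i t) m) (F m)).
    + apply IH; intros; apply H; lia.
    + apply H; lia.
Qed.

Definition sq (z : C) : R := fst z * fst z + snd z * snd z.
Definition ip (z w : C) : R := fst z * fst w + snd z * snd w.

Lemma sq_nonneg z : 0 <= sq z.
Proof. unfold sq. nra. Qed.

Lemma sq_eq0 z : sq z = 0 -> z = RtoC 0.
Proof.
  destruct z as [a c]. unfold sq; simpl. intros H.
  assert (a = 0) by nra. assert (c = 0) by nra. subst. reflexivity.
Qed.

Lemma ip_bound z w : Rabs (2 * ip z w) <= sq z + sq w.
Proof.
  destruct z as [a1 a2], w as [b1 b2]. unfold ip, sq; simpl. apply Rabs_le.
  pose proof (Rle_0_sqr (a1 - b1)). pose proof (Rle_0_sqr (a2 - b2)).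
  pose proof (Rle_0_sqr (a1 + b1)). pose proof (Rle_0_sqr (a2 + b2)).
  unfold Rsqr in *. split; nra.
Qed.

Lemma ip_Cmult_bound z q w : Rabs (2 * ip z (q * w)%C) <= sq z + sq q * sq w.
Proof.
  replace (sq q * sq w) with (sq (q * w)%C) by (destruct q, w; unfold sq; simpl; ring).
  apply ip_bound.
Qed.

Lemma ip_Cminus z w v : ip z (w - v)%C = ip z w - ip z v.
Proof. destruct z, w, v. unfold ip; simpl. ring. Qed.

Lemma ip_csum z f m : ip z (csum f m) = rsum (fun j => ip z (f j)) m.
Proof.
  induction m as [|m IH]; simpl; [unfold ip; simpl; ring|].
  rewrite <- IH. destruct z, (csum f m), (f m). unfold ip; simpl. ring.
Qed.

Lemma is_derive_sq (f : R -> C) x l :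
  is_derive f x l -> is_derive (fun t => sq (f t)) x (2 * ip (f x) l).
Proof.
  intros H. assert (H1 := is_derive_Re _ _ _ H). assert (H2 := is_derive_Im _ _ _ H).
  unfold sq.
  replace (2 * ip (f x) l) with
    (fst l * fst (f x) + fst (f x) * fst l + (snd l * snd (f x) + snd (f x) * snd l))
    by (unfold ip; simpl; ring).
  apply (is_derive_plus (fun t => fst (f t) * fst (f t)) (fun t => snd (f t) * snd (f t)));
    apply (is_derive_mult (K := R_AbsRing)); auto; intros; apply Rmult_comm.
Qed.

Lemma energy_derivative_bound n (d : nat -> C) (mu : C) (q : nat -> C) P :
  sq mu <= P -> (forall j, (j < n - 1)%nat -> sq (q j) <= P) ->
  d n = (mu * d 0%nat - csum (fun j => q j * d j) (n - 1))%C ->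
  Rabs (rsum (fun k => 2 * ip (d k) (d (S k))) n)
    <= INR n * (INR n * (1 + P) + 2) * rsum (fun k => sq (d k)) n.
Proof.
  intros Hmu Hq Hdn. set (E := rsum (fun k => sq (d k)) n).
  assert (HE : forall k, (k < n)%nat -> sq (d k) <= E)
    by (intros k Hk; apply (rsum_term (fun k => sq (d k))); auto using sq_nonneg).
  assert (0 <= E) by (apply rsum_nonneg; auto using sq_nonneg).
  assert (0 <= P) by (pose proof (sq_nonneg mu); lra).
  assert (0 <= INR n * (1 + P) * E)
    by (apply Rmult_le_pos; [apply Rmult_le_pos; [apply pos_INR|]|]; lra).
  eapply Rle_trans; [apply rsum_abs|].
  rewrite Rmult_assoc, <- rsum_const. apply rsum_le. intros k Hk.
  destruct (Nat.eq_dec (S k) n) as [Hkn|Hkn].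
  - rewrite Hkn, Hdn, ip_Cminus, ip_csum, Rmult_minus_distr_l, <- rsum_const.
    assert (Hsum : Rabs (2 * rsum (fun j => ip (d k) (q j * d j)%C) (n - 1))
                   <= INR (n - 1) * (E + P * E)).
    { rewrite <- rsum_const.
      replace (2 * rsum (fun j => ip (d k) (q j * d j)%C) (n - 1))
        with (rsum (fun j => 2 * ip (d k) (q j * d j)%C) (n - 1))
        by (clear; induction (n - 1)%nat; simpl; [ring | rewrite IHn0; ring]).
      eapply Rle_trans; [apply rsum_abs|]. apply rsum_le. intros j Hj.
      eapply Rle_trans; [apply ip_Cmult_bound|].
      apply Rplus_le_compat; [apply HE; lia|].
      apply Rmult_le_compat; auto using sq_nonneg. apply HE; lia. }
    assert (Hmu0 : Rabs (2 * ip (d k) (mu * d 0%nat)%C) <= E + P * E).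
    { eapply Rle_trans; [apply ip_Cmult_bound|].
      apply Rplus_le_compat; [apply HE; lia|].
      apply Rmult_le_compat; auto using sq_nonneg. apply HE; lia. }
    rewrite rsum_const.
    assert (Hn : INR (n - 1) + 1 = INR n) by (rewrite <- S_INR; f_equal; lia).
    assert (Hb : E + P * E + INR (n - 1) * (E + P * E) = INR n * (1 + P) * E)
      by (rewrite <- Hn; ring).
    eapply Rle_trans; [apply Rabs_triang|]. rewrite Rabs_Ropp. lra.
  - eapply Rle_trans; [apply ip_bound|].
    assert (sq (d k) <= E) by (apply HE; lia). assert (sq (d (S k)) <= E) by (apply HE; lia).
    lra.
Qed.

End Energy.

Section Uniqueness.

Open Scope R_scope.

Lemma antitone_of_nonpos_derive (h h' : R -> R) a c : a <= c ->
  (forall t, is_derive h t (h' t)) -> (forall t, a <= t <= c -> h' t <= 0) -> h c <= h a.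
Proof.
  intros Hac Hd Hneg.
  destruct (MVT_gen h a c h') as [t [Ht Hmvt]].
  - intros t _. apply Hd.
  - intros t _. apply continuity_pt_filterlim, (ex_derive_continuous h). exists (h' t). apply Hd.
  - rewrite Rmin_left, Rmax_right in Ht by lra.
    assert (h' t <= 0) by (apply Hneg; lra). nra.
Qed.

Lemma energy_vanishes (E E' : R -> R) L x0 x :
  (forall t, is_derive E t (E' t)) -> (forall t, 0 <= E t) ->
  (forall t, Rmin x0 x <= t <= Rmax x0 x -> Rabs (E' t) <= L * E t) ->
  E x0 = 0 -> E x = 0.
Proof.
  intros HE Hpos Hb H0.
  assert (Hweight : forall s t, is_derive (fun t => E t * exp (s * t)) t
                      (E' t * exp (s * t) + E t * (exp (s * t) * s))).
  { intros s t.
    assert (Hexp : is_derive (fun t => exp (s * t)) t (exp (s * t) * s))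
      by (auto_derive; [auto | ring]).
    exact (is_derive_mult (K := R_AbsRing) E _ t _ _ (HE t) Hexp Rmult_comm). }
  assert (HEx := Hpos x).
  destruct (Rle_or_lt x0 x) as [Hx|Hx].
  - assert (Hle := antitone_of_nonpos_derive _ _ x0 x Hx (Hweight (- L))).
    cbv beta in Hle. rewrite H0 in Hle. assert (exp (- L * x) > 0) by apply exp_pos.
    enough (E x * exp (- L * x) <= 0 * exp (- L * x0)) by nra.
    apply Hle. intros t Ht. assert (exp (- L * t) > 0) by apply exp_pos.
    assert (Ht' := Hb t ltac:(rewrite Rmin_left, Rmax_right by lra; lra)).
    apply Rabs_le_between in Ht'. nra.
  - assert (Hle := antitone_of_nonpos_derive (fun t => - (E t * exp (L * t)))
                    (fun t => - (E' t * exp (L * t) + E t * (exp (L * t) * L)))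
                    x x0 (Rlt_le _ _ Hx)).
    cbv beta in Hle. rewrite H0 in Hle. assert (exp (L * x) > 0) by apply exp_pos.
    enough (- (0 * exp (L * x0)) <= - (E x * exp (L * x))) by nra.
    apply Hle.
    + intros t. apply (is_derive_opp (fun t => E t * exp (L * t))), Hweight.
    + intros t Ht. assert (exp (L * t) > 0) by apply exp_pos.
      assert (Ht' := Hb t ltac:(rewrite Rmin_right, Rmax_left by lra; lra)).
      apply Rabs_le_between in Ht'. nra.
Qed.

Lemma continuous_family_bounded (F : nat -> R -> R) m a c : a <= c ->
  (forall j, (j < m)%nat -> forall t, continuity_pt (F j) t) ->
  exists P, forall j, (j < m)%nat -> forall t, a <= t <= c -> F j t <= P.
Proof.
  intros Hac. induction m as [|m IH]; intros H; [exists 0; intros; lia|].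
  destruct IH as [P HP]; [intros; apply H; lia|].
  destruct (continuity_ab_maj (F m) a c Hac) as [t0 [Ht0 _]].
  { intros t _. apply H. lia. }
  exists (Rmax P (F m t0)). intros j Hj t Ht.
  destruct (Nat.eq_dec j m) as [->|].
  - eapply Rle_trans; [apply Ht0, Ht | apply Rmax_r].
  - eapply Rle_trans; [apply HP; auto; lia | apply Rmax_l].
Qed.

(* Gronwall's argument for the energy E(t) = sum_(k < n) |u^(k)(t)|^2. *)
Lemma solution_zero_initial n p mu u d : (1 <= n)%nat ->
  (forall k, (k < n - 1)%nat -> forall t, continuity_pt (fun t => sq (p k t)) t) ->
  solution_chain n p mu u d -> (forall k, (k < n)%nat -> d k 0 = RtoC 0) ->
  forall x, u x = RtoC 0.
Proof.
  intros Hn Hp [[H0 Hd] Heq] Hz x.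
  destruct (continuous_family_bounded (fun k t => sq (p k t)) (n - 1) (Rmin 0 x) (Rmax 0 x)
    (Rminmax 0 x) Hp) as [P HP].
  set (E := fun t => rsum (fun k => sq (d k t)) n).
  assert (HEx : E x = 0).
  { apply (energy_vanishes E (fun t => rsum (fun k => 2 * ip (d k t) (d (S k) t)) n)
      (INR n * (INR n * (1 + Rmax P (sq mu)) + 2)) 0 x).
    - intros t. apply is_derive_rsum. intros k Hk. apply is_derive_sq, Hd, Hk.
    - intros t. apply rsum_nonneg. intros; apply sq_nonneg.
    - intros t Ht. apply (energy_derivative_bound n (fun k => d k t) mu (fun j => p j t)).
      + apply Rmax_r.
      + intros j Hj. eapply Rle_trans; [apply HP; auto | apply Rmax_l].
      + cbv beta. rewrite H0, <- (Heq t). ring.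
    - unfold E. apply Rle_antisym; [|apply rsum_nonneg; intros; apply sq_nonneg].
      apply (Rle_trans _ (rsum (fun _ => 0) n)); [|rewrite rsum_const; lra].
      apply rsum_le. intros k Hk. rewrite Hz by exact Hk. unfold sq; simpl; lra. }
  rewrite <- H0. apply sq_eq0, Rle_antisym; [|apply sq_nonneg].
  rewrite <- HEx. apply (rsum_term (fun k => sq (d k x))); [intros; apply sq_nonneg | lia].
Qed.

Lemma dim_le_solutions n p mu : (1 <= n)%nat ->
  (forall k, (k < n - 1)%nat -> forall t, continuity_pt (fun t => sq (p k t)) t) ->
  dim_le (is_solution n p mu) n.
Proof.
  intros Hn Hp f Hf Hind.
  destruct (choice (fun i d => (i < S n)%nat -> solution_chain n p mu (f i) d)) as [d Hd].
  { intros i. destruct (lt_dec i (S n)) as [Hi|Hi].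
    - destruct (Hf i Hi) as [d Hd]. exists d. auto.
    - exists (fun _ _ => RtoC 0). intros; lia. }
  destruct (ComplexAlgebra.exists_nontrivial_relation n (S n) (fun i k => d i k 0)
    (Nat.lt_succ_diag_r n)) as [c [[i [Hi Hci]] Hc]].
  apply Hci, (Hind c); auto. intros x.
  apply (solution_zero_initial n p mu _ _ Hn Hp (solution_chain_lcomb n p mu f d c (S n) Hd)).
  exact Hc.
Qed.
End Uniqueness.

Lemma smooth_sq_continuous (f : R -> C) t : smooth f -> continuity_pt (fun t => sq (f t)) t.
Proof.
  intros [d [H0 Hd]]. apply continuity_pt_filterlim, (ex_derive_continuous (fun t => sq (f t))).
  exists (2 * ip (f t) (d 1%nat t))%R. apply is_derive_sq. rewrite <- H0. apply Hd.
Qed.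

Section Eigenspace.

Variables (n : nat) (p : nat -> R -> C) (b : R) (mu : C).
Hypotheses (Hn : (1 <= n)%nat)
  (Hcont : forall k, (k < n - 1)%nat -> forall t, continuity_pt (fun t => sq (p k t)) t)
  (Hper : forall k, (k <= n - 2)%nat -> periodic b (p k)).

Definition zero_on_grid k (u : R -> C) := forall j, (j < k)%nat -> u (INR j * b)%R = 0.

Lemma INR_S_mult j : (INR j * b + b)%R = (INR (S j) * b)%R.
Proof. rewrite S_INR. ring. Qed.

Lemma zero_on_grid_shift k u : zero_on_grid (S k) u -> zero_on_grid k (shift b u).
Proof. intros Hz j Hj. unfold shift. rewrite INR_S_mult. apply Hz. lia. Qed.

Lemma solution_zero_on_grid_next u :
  is_solution n p mu u -> zero_on_grid n u -> u (INR n * b)%R = 0.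
Proof.
  set (Q := fun k => forall v, is_solution n p mu v -> zero_on_grid k v -> v (INR k * b)%R = 0).
  assert (HQS : forall k, Q k -> Q (S k)).
  { intros k Hk v Hv Hz. rewrite <- INR_S_mult.
    apply (Hk (shift b v)); [apply stable_solutions_shift | apply zero_on_grid_shift]; auto. }
  assert (Hex : exists k, (k <= n)%nat /\ Q k).
  { apply NNPP; intros Hno.
    assert (Hw : forall k, exists g, (k <= n)%nat ->
      is_solution n p mu g /\ zero_on_grid k g /\ g (INR k * b)%R <> 0).
    { intros k. destruct (le_lt_dec k n) as [Hk|Hk]; [|exists fzero; intros; lia].
      apply NNPP; intros Hng. apply Hno. exists k. split; auto.
      intros g Hg Hz. apply NNPP; intros Hgk. apply Hng. exists g. auto. }
    destruct (choice _ Hw) as [g Hg].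
    apply (dim_le_solutions n p mu Hn Hcont g).
    - intros k Hk. apply Hg. lia.
    - apply (independent_triangular g (fun j => INR j * b)%R).
      + intros k j Hjk. apply Hg; lia.
      + intros k Hk. apply Hg. lia. }
  destruct Hex as [k [Hk HQk]].
  assert (HQ : forall d, Q (d + k)%nat) by (induction d; simpl; auto).
  specialize (HQ (n - k)%nat). replace (n - k + k)%nat with n in HQ by lia. exact (HQ u).
Qed.

Lemma subspace_eigenspace : subspace (in_eigenspace n p b mu).
Proof.
  destruct (subspace_solutions n p mu) as (H0 & Hadd & Hscal). split; [|split].
  - split; [exact H0 | intros j Hj; reflexivity].
  - intros u v [Hu Hzu] [Hv Hzv]. split; [auto|].
    intros j Hj. unfold fadd. rewrite Hzu, Hzv by exact Hj. ring.
  - intros a u [Hu Hzu]. split; [auto|].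
    intros j Hj. unfold fscale. rewrite Hzu by exact Hj. ring.
Qed.

Lemma stable_eigenspace_shift : stable (in_eigenspace n p b mu) (shift b).
Proof.
  intros u [Hu Hz]. split; [apply stable_solutions_shift; auto|].
  intros j Hj. unfold shift. rewrite INR_S_mult.
  destruct (Nat.eq_dec (S j) n) as [->|]; [apply solution_zero_on_grid_next; auto | apply Hz; lia].
Qed.

Lemma floquet_of_iter a l g : is_solution n p mu g ->
  Nat.iter (S l) (shift_sub b a) g = fzero -> nonzero (Nat.iter l (shift_sub b a) g) ->
  floquet n p b mu a (S l) g.
Proof.
  revert g. induction l as [|l IH]; intros g Hg Hz Hnz.
  - split; [exact Hg | split; [exact Hnz|]]. intros x.
    apply (f_equal (fun v => v x)) in Hz. simpl in Hz. unfold shift_sub, fzero in Hz.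
    replace (g (x + b)%R) with (g (x + b)%R - a * g x + a * g x) by ring. rewrite Hz. ring.
  - split; [exact Hg|]. exists (shift_sub b a g). split.
    + apply IH; [apply stable_shift_sub; auto using subspace_solutions, stable_solutions_shift | |];
        rewrite <- Nat.iter_succ_r; assumption.
    + intros x. unfold shift_sub. ring.
Qed.

Lemma floquet_of_gen_eigen g : is_solution n p mu g -> gen_eigen b g -> nonzero g ->
  exists l r, (1 <= l)%nat /\ floquet n p b mu r l g.
Proof.
  intros Hg [a [k Hk]] Hnz.
  destruct (exists_nilpotency_index (shift_sub b a) g k Hk Hnz) as [l [Hl Hnzl]].
  exists (S l), a. split; [lia | apply floquet_of_iter; auto].
Qed.

Lemma eigenspace_floquet_basis : exists m f,
  (forall i, (i < m)%nat -> in_eigenspace n p b mu (f i) /\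
     exists l r, (1 <= l)%nat /\ floquet n p b mu r l (f i)) /\
  independent f m /\
  (forall u, in_eigenspace n p b mu u -> exists c, u = lcomb c f m).
Proof.
  set (D := in_eigenspace n p b mu).
  assert (HD : subspace D) by exact subspace_eigenspace.
  assert (HDdim : dim_le D n).
  { apply (dim_le_sub D (is_solution n p mu)); [intros u [Hu _]; exact Hu|].
    exact (dim_le_solutions n p mu Hn Hcont). }
  set (G := fun v => D v /\ gen_eigen b v).
  destruct (exists_maximal_independent G n (dim_le_sub G D n (fun v Hv => proj1 Hv) HDdim))
    as [m [f [Hf [Hind Hmax]]]].
  exists m, f. split; [|split; [exact Hind|]].
  - intros i Hi. destruct (Hf i Hi) as [HDi Hgi]. split; [exact HDi|].
    apply floquet_of_gen_eigen; [apply HDi | exact Hgi | exact (independent_nonzero f m i Hind Hi)].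
  - intros u Hu. apply (spanned_lcomb G).
    + intros v Hv. exact (maximal_independent_spans G f m v Hf Hind Hmax Hv).
    + exact (spanned_gen_eigen b n D HD stable_eigenspace_shift HDdim u Hu).
Qed.

Lemma eigenspace_shift_sub r u :
  in_eigenspace n p b mu u -> in_eigenspace n p b mu (shift_sub b r u).
Proof. apply stable_shift_sub; [exact subspace_eigenspace | exact stable_eigenspace_shift]. Qed.

End Eigenspace.

Close Scope C_scope.
Open Scope R_scope.

Theorem theorem3 (n : nat) (b : R) (p : nat -> R -> C) (mu : C) :
  (2 <= n)%nat -> 0 < b ->
  (forall k, (k <= n - 2)%nat -> smooth (p k) /\ periodic b (p k)) ->
  is_eigenvalue n p b mu ->
  (exists (m : nat) (f : nat -> R -> C),
      (forall i, (i < m)%nat ->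
         in_eigenspace n p b mu (f i) /\
         exists (l : nat) (r : C), (1 <= l)%nat /\ floquet n p b mu r l (f i)) /\
      (forall c : nat -> C,
         (forall x, csum (fun i => (c i * f i x)%C) m = RtoC 0) ->
         forall i, (i < m)%nat -> c i = RtoC 0) /\
      (forall u, in_eigenspace n p b mu u ->
         exists c : nat -> C, forall x, u x = csum (fun i => (c i * f i x)%C) m))
  /\
  (forall (l : nat) (r : C) (psi psi' : R -> C),
      (2 <= l)%nat ->
      floquet n p b mu r l psi ->
      in_eigenspace n p b mu psi ->
      floquet n p b mu r (l - 1) psi' ->
      (forall x, psi (x + b) = (r * psi x + psi' x)%C) ->
      in_eigenspace n p b mu psi').
Proof.
  intros Hn2 _ Hp _.
  assert (Hn : (1 <= n)%nat) by lia.
  assert (Hper : forall k, (k <= n - 2)%nat -> periodic b (p k)) by (intros; apply Hp; auto).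
  assert (Hcont : forall k, (k < n - 1)%nat -> forall t, continuity_pt (fun t => sq (p k t)) t)
    by (intros k Hk t; apply smooth_sq_continuous, Hp; lia).
  split.
  - destruct (eigenspace_floquet_basis n p b mu Hn Hcont Hper)
      as [m [f [Hfloquet [Hind Hspan]]]].
    exists m, f. split; [exact Hfloquet | split; [exact Hind|]].
    intros u Hu. destruct (Hspan u Hu) as [c ->]. exists c. reflexivity.
  - intros l r psi psi' _ _ Hpsi _ Hrel.
    replace psi' with (shift_sub b r psi).
    + exact (eigenspace_shift_sub n p b mu Hn Hcont Hper r psi Hpsi).
    + apply functional_extensionality; intros x. unfold shift_sub. rewrite Hrel. ring.
Qed.
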